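(* Let $A=(a_{i,j})$ be an $n\times n$ Monge matrix and $B=(b_{i,j})$ an $n\times n$ Anti-Monge matrix, and consider RecovAP with $c_1(\{u_i,v_j\})=a_{i,j}$, $c_2(\{u_i,v_j\})=b_{i,j}$ and intersection bound $k$ (admitting a feasible solution). Then there is a feasible solution $M_1,M_2$ of minimum cost $c_1(M_1)+c_2(M_2)$ such that all $4$-cycles of $M_1,M_2$ are aligned, any two $4$-cycles are nested (one inside the other), and every $2$-cycle is nested inside every $4$-cycle.
   Context: $K_{n,n}$ has vertex classes $U=\{u_1,\dots,u_n\}$, $V=\{v_1,\dots,v_n\}$. RecovAP: find perfect matchings $M_1,M_2$ of $K_{n,n}$ with $|M_1\cap M_2|\ge k$ minimizing $c_1(M_1)+c_2(M_2)$. $A$ is Monge if $a_{i,j}+a_{k,l}\le a_{i,l}+a_{k,j}$ for all $i<k$, $j<l$; $B$ is Anti-Monge if the reverse inequality holds. For perfect matchings $M_1,M_2$, the multigraph $M_1\cup M_2$ decomposes into $M_1$-$M_2$-alternating cycles; an edge $\{u_i,v_j\}\in M_1\cap M_2$ is called a $2$-cycle $(i,j)$, and an alternating cycle with four edges $\{u_i,v_j\},\{u_{i'},v_{j'}\}\in M_1$, $\{u_i,v_{j'}\},\{u_{i'},v_j\}\in M_2$ is a $4$-cycle $(i,j,i',j')$; it is aligned if $i<i'$ and $j<j'$. An aligned $4$-cycle $(i_1,j_1,i_1',j_1')$ is nested inside an aligned $4$-cycle $(i_2,j_2,i_2',j_2')$ if $i_2<i_1<i_1'<i_2'$ and $j_2<j_1<j_1'<j_2'$;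 a $2$-cycle $(i_1,j_1)$ is nested inside $(i_2,j_2,i_2',j_2')$ if $i_2<i_1<i_2'$ and $j_2<j_1<j_2'$. *)

From mathcomp Require Import all_boot all_order all_algebra all_fingroup.
Set Implicit Arguments. Unset Strict Implicit. Unset Printing Implicit Defensive.
Import Order.TTheory GRing.Theory Num.Theory.
Local Open Scope ring_scope.

(* A perfect matching of K_{n,n} with classes U = {u_0..u_{n-1}},
   V = {v_0..v_{n-1}} is represented by a permutation s : {perm 'I_n};
   its edge set is { {u_i, v_(s i)} | i }. *)

Definition monge (R : numDomainType) (n : nat) (A : 'M[R]_n) : Prop :=
  forall i k j l : 'I_n, (i < k)%N -> (j < l)%N ->
    A i j + A k l <= A i l + A k j.

Definition antimonge (R : numDomainType) (n : nat) (B : 'M[R]_n) : Prop :=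
  forall i k j l : 'I_n, (i < k)%N -> (j < l)%N ->
    B i j + B k l >= B i l + B k j.

Definition mcost (R : numDomainType) (n : nat) (C : 'M[R]_n) (s : {perm 'I_n}) : R :=
  \sum_(i < n) C i (s i).

(* |M1 ∩ M2| : edge {u_i,v_j} lies in both iff s1 i = j = s2 i *)
Definition common (n : nat) (s1 s2 : {perm 'I_n}) : nat :=
  #|[set i : 'I_n | s1 i == s2 i]|.

Definition feasible (n k : nat) (s1 s2 : {perm 'I_n}) : Prop :=
  (k <= common s1 s2)%N.

Definition recov_cost (R : numDomainType) (n : nat) (A B : 'M[R]_n)
  (s1 s2 : {perm 'I_n}) : R := mcost A s1 + mcost B s2.

Definition two_cycle (n : nat) (s1 s2 : {perm 'I_n}) (i j : 'I_n) : bool :=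
  (s1 i == j) && (s2 i == j).

(* 4-cycle (i,j,i',j'): {u_i,v_j},{u_i',v_j'} ∈ M1 and {u_i,v_j'},{u_i',v_j} ∈ M2,
   these four edges being distinct (i <> i', j <> j'). *)
Definition four_cycle (n : nat) (s1 s2 : {perm 'I_n}) (i j i' j' : 'I_n) : bool :=
  [&& i != i', j != j', s1 i == j, s1 i' == j', s2 i == j' & s2 i' == j].

Definition aligned (n : nat) (i j i' j' : 'I_n) : bool :=
  (i < i')%N && (j < j')%N.

Definition nested4 (n : nat) (i1 j1 i1' j1' i2 j2 i2' j2' : 'I_n) : bool :=
  [&& (i2 < i1)%N, (i1 < i1')%N, (i1' < i2')%N,
      (j2 < j1)%N, (j1 < j1')%N & (j1' < j2')%N].

Definition nested2 (n : nat) (i1 j1 i2 j2 i2' j2' : 'I_n) : bool :=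
  [&& (i2 < i1)%N, (i1 < i2')%N, (j2 < j1)%N & (j1 < j2')%N].

From mathcomp Require Import all_boot all_order all_algebra all_fingroup.
From mathcomp Require Import zify.
Import Order.TTheory GRing.Theory Num.Theory.
Local Open Scope ring_scope.
Set Implicit Arguments. Unset Strict Implicit. Unset Printing Implicit Defensive.

(* Among the optimal feasible pairs (s1, s2), pick one minimising the potential
   sum_i i * s2 i - sum_i i * s1 i.  Exchanging the images of two positions x < y
   does not increase the cost and strictly decreases the potential when it removes
   an inversion of s1 (A is Monge) or an ascent of s2 (B is anti-Monge); hence every
   such exchange, and every composite of two, must decrease |M1 ∩ M2|.  So s1 is
   increasing and s2 decreasing on the positions outside M1 ∩ M2, which aligns and
   nests the 4-cycles; no pair of positions is both an inversion of s1 and an ascent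
   of s2; and a 2-cycle outside a 4-cycle would allow a rotation of three positions,
   made of two exchanges, that does not decrease |M1 ∩ M2|. *)

Section Matchings.
Variable n : nat.
Implicit Types (s t : {perm 'I_n}) (x y z : 'I_n).

Definition swap s x y : {perm 'I_n} := (tperm x y * s)%g.

Lemma swapL s x y : swap s x y x = s y.
Proof. by rewrite permM tpermL. Qed.

Lemma swapR s x y : swap s x y y = s x.
Proof. by rewrite permM tpermR. Qed.

Lemma swapD s x y z : z != x -> z != y -> swap s x y z = s z.
Proof. by move=> zx zy; rewrite permM tpermD // eq_sym. Qed.

Lemma mcost_swap (R : numDomainType) (C : 'M[R]_n) s x y : x != y ->
  mcost C (swap s x y) - mcost C s
    = C x (s y) + C y (s x) - (C x (s x) + C y (s y)).
Proof.
move=> xy; have sum2 (G : 'I_n -> R) :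
    \sum_(i < n) G i = G x + G y + \sum_(i < n | (i != x) && (i != y)) G i.
  rewrite (bigD1 x) // (bigD1 y) 1?eq_sym //= addrA.
  by congr (_ + _); apply: eq_bigl => i; rewrite andbC.
rewrite /mcost !sum2 swapL swapR (eq_bigr (fun i => C i (s i))).
  by rewrite [X in _ - X]addrC addrKA.
by move=> i /andP[ix iy]; rewrite swapD.
Qed.

Lemma mcost_swap_monge (R : numDomainType) (C : 'M[R]_n) s x y : monge C ->
  (x < y)%N -> (s y < s x)%N -> mcost C (swap s x y) <= mcost C s.
Proof.
move=> HC xy syx; rewrite -subr_le0 (mcost_swap C s (negbT (ltn_eqF xy))) subr_le0.
exact: HC.
Qed.

Lemma mcost_swap_antimonge (R : numDomainType) (C : 'M[R]_n) s x y : antimonge C ->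
  (x < y)%N -> (s x < s y)%N -> mcost C (swap s x y) <= mcost C s.
Proof.
move=> HC xy sxy; rewrite -subr_le0 (mcost_swap C s (negbT (ltn_eqF xy))) subr_le0.
exact: HC.
Qed.

Definition agree s t := [set i | s i == t i].

Lemma common_mulg (p s t : {perm 'I_n}) : common (p * s)%g (p * t)%g = common s t.
Proof.
rewrite /common -(card_preimset [set i | s i == t i] (@perm_inj _ p)).
by apply: eq_card => i; rewrite !inE !permM.
Qed.

Lemma common_le_local (W : {set 'I_n}) s1 s2 t1 t2 :
  (forall i, i \notin W -> t1 i = s1 i /\ t2 i = s2 i) ->
  (#|agree s1 s2 :&: W| <= #|agree t1 t2 :&: W|)%N ->
  (common s1 s2 <= common t1 t2)%N.
Proof.
move=> off leW; rewrite /common -(cardsID W) -[X in (_ <= X)%N](cardsID W).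
rewrite (_ : _ :\: W = agree t1 t2 :\: W) ?leq_add2r //.
by apply/setP => i; rewrite !inE; case: (boolP (i \in W)) => //= /off[-> ->].
Qed.

Definition index_prod_mx : 'M[int]_n := \matrix_(i, j) (i * j)%N%:Z.

Lemma index_prod_mx_lt (i k j l : 'I_n) : (i < k)%N -> (j < l)%N ->
  index_prod_mx i l + index_prod_mx k j < index_prod_mx i j + index_prod_mx k l.
Proof. by move=> ik jl; rewrite !mxE -!PoszD ltz_nat; nia. Qed.

Definition potential s1 s2 : int :=
  mcost index_prod_mx s2 - mcost index_prod_mx s1.

Lemma potential_swap1 s1 s2 x y : (x < y)%N -> (s1 y < s1 x)%N ->
  potential (swap s1 x y) s2 < potential s1 s2.
Proof.
move=> xy syx; rewrite ltrD2l ltrN2 -subr_gt0.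
by rewrite (mcost_swap _ s1 (negbT (ltn_eqF xy))) subr_gt0 index_prod_mx_lt.
Qed.

Lemma potential_swap2 s1 s2 x y : (x < y)%N -> (s2 x < s2 y)%N ->
  potential s1 (swap s2 x y) < potential s1 s2.
Proof.
move=> xy sxy; rewrite ltrD2r -subr_lt0.
by rewrite (mcost_swap _ s2 (negbT (ltn_eqF xy))) subr_lt0 index_prod_mx_lt.
Qed.

Lemma four_cycle_disagree s1 s2 i j i' j' : four_cycle s1 s2 i j i' j' ->
  (s1 i != s2 i) && (s1 i' != s2 i').
Proof.
by case/and5P=> _ jj' /eqP-> /eqP-> /andP[/eqP-> /eqP->]; rewrite jj' eq_sym jj'.
Qed.

End Matchings.

Section Improvement.
Variables (R : realDomainType) (n : nat) (A B : 'M[R]_n).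
Implicit Types (s t : {perm 'I_n}) (x y : 'I_n).

Definition improves t1 t2 s1 s2 :=
  recov_cost A B t1 t2 <= recov_cost A B s1 s2 /\ potential t1 t2 < potential s1 s2.

Lemma improves_trans u1 u2 t1 t2 s1 s2 :
  improves u1 u2 t1 t2 -> improves t1 t2 s1 s2 -> improves u1 u2 s1 s2.
Proof. by move=> [c1 p1] [c2 p2]; split; [apply: le_trans c2 | apply: lt_trans p2]. Qed.

Lemma improves_swap1 s1 s2 x y : monge A -> (x < y)%N -> (s1 y < s1 x)%N ->
  improves (swap s1 x y) s2 s1 s2.
Proof.
move=> HA xy syx; split; last exact: potential_swap1.
by rewrite lerD2r mcost_swap_monge.
Qed.

Lemma improves_swap2 s1 s2 x y : antimonge B -> (x < y)%N -> (s2 x < s2 y)%N ->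
  improves s1 (swap s2 x y) s1 s2.
Proof.
move=> HB xy sxy; split; last exact: potential_swap2.
by rewrite lerD2l mcost_swap_antimonge.
Qed.

Definition extremal s1 s2 :=
  forall t1 t2, (common s1 s2 <= common t1 t2)%N -> ~ improves t1 t2 s1 s2.

Lemma exists_extremal_optimum k : (exists s1 s2, feasible k s1 s2) ->
  exists s1 s2, [/\ feasible k s1 s2,
    (forall t1 t2, feasible k t1 t2 -> recov_cost A B s1 s2 <= recov_cost A B t1 t2)
    & extremal s1 s2].
Proof.
case=> p1 [p2 feas_p].
pose cost (p : {perm 'I_n} * {perm 'I_n}) := recov_cost A B p.1 p.2.
pose feasible_pair (p : {perm 'I_n} * {perm 'I_n}) := (k <= common p.1 p.2)%N.
have [q feas_q q_opt] := @arg_minP _ R _ (p1, p2) feasible_pair cost feas_p.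
pose optimal p := feasible_pair p && (cost p <= cost q).
have opt_q : optimal q by rewrite /optimal feas_q lexx.
have [[s1 s2] /andP[feas_s cost_s] s_min] :=
  @arg_minP _ int _ q optimal (fun p => potential p.1 p.2) opt_q.
exists s1, s2; split=> // [t1 t2 feas_t | t1 t2 common_le [cost_t pot_t]].
  exact: le_trans cost_s (q_opt (t1, t2) feas_t).
have feas_t : feasible k t1 t2 by apply: leq_trans common_le.
have := s_min (t1, t2); rewrite /optimal /feasible_pair feas_t (le_trans cost_t cost_s).
by move/(_ isT); rewrite leNgt pot_t.
Qed.

End Improvement.

Section Extremal.
Variables (R : realDomainType) (n : nat) (A B : 'M[R]_n).
Hypotheses (HA : monge A) (HB : antimonge B).
Variables s1 s2 : {perm 'I_n}.
Hypothesis ext : extremal A B s1 s2.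
Implicit Types (t : {perm 'I_n}) (x y : 'I_n).

Lemma extremal_no_pair_improvement t1 t2 x y : improves A B t1 t2 s1 s2 ->
  s1 x != s2 x -> s1 y != s2 y ->
  (forall i, i != x -> i != y -> t1 i = s1 i /\ t2 i = s2 i) -> False.
Proof.
move=> imp nx ny off; apply: ext imp; apply/subset_leq_card/subsetP => i.
rewrite !inE => si; have [||-> -> //] := off i.
- by apply: contraNneq nx => <-.
- by apply: contraNneq ny => <-.
Qed.

Lemma extremal_no_triple_improvement t1 t2 e a a' : improves A B t1 t2 s1 s2 ->
  s1 a != s2 a -> s1 a' != s2 a' ->
  (forall i, i != e -> i != a -> i != a' -> t1 i = s1 i /\ t2 i = s2 i) ->
  [|| t1 e == t2 e, t1 a == t2 a | t1 a' == t2 a'] -> False.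
Proof.
move=> imp na na' off agree_t; apply: ext imp.
apply: (common_le_local (W := [set e; a; a'])).
  by move=> i; rewrite !inE -orbA !negb_or => /and3P[]; apply: off.
(* Inside {e, a, a'}, the pair (s1, s2) can only agree at e. *)
apply: (@leq_trans 1).
  rewrite -(cards1 e); apply/subset_leq_card/subsetP => i; rewrite !inE -orbA.
  by case/andP=> si /or3P[// | /eqP ei | /eqP ei]; [move: na | move: na'];
    rewrite -ei si.
rewrite card_gt0; apply/set0Pn.
by case/or3P: agree_t => agree_ti; [exists e | exists a | exists a'];
  rewrite !inE eqxx agree_ti ?orbT.
Qed.

Lemma extremal_s1_increasing x y : s1 x != s2 x -> s1 y != s2 y ->
  (s1 x < s1 y)%N = (x < y)%N.
Proof.
suff lt_s1 x' y' : (x' < y')%N -> s1 x' != s2 x' -> s1 y' != s2 y' ->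
    (s1 x' < s1 y')%N.
  move=> nx ny; case: (ltngtP x y) => [xy | yx | /val_inj->]; first exact: lt_s1.
    by rewrite ltnNge ltnW ?lt_s1.
  by rewrite ltnn.
move=> xy nx ny; case: (ltngtP (s1 x') (s1 y')) => [// | syx | /val_inj/perm_inj exy].
  case: (extremal_no_pair_improvement (improves_swap1 B s2 HA xy syx) nx ny).
  by move=> i ix iy; rewrite swapD.
by move: xy; rewrite exy ltnn.
Qed.

Lemma extremal_s2_decreasing x y : s1 x != s2 x -> s1 y != s2 y ->
  (s2 x < s2 y)%N = (y < x)%N.
Proof.
suff lt_s2 x' y' : (x' < y')%N -> s1 x' != s2 x' -> s1 y' != s2 y' ->
    (s2 y' < s2 x')%N.
  move=> nx ny; case: (ltngtP x y) => [xy | yx | /val_inj->]; last by rewrite ltnn.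
    by rewrite ltnNge ltnW ?lt_s2.
  exact: lt_s2.
move=> xy nx ny; case: (ltngtP (s2 y') (s2 x')) => [// | sxy | /val_inj/perm_inj eyx].
  case: (extremal_no_pair_improvement (improves_swap2 A s1 HB xy sxy) nx ny).
  by move=> i ix iy; rewrite swapD.
by move: xy; rewrite eyx ltnn.
Qed.

Lemma extremal_no_cross x y : (x < y)%N -> (s1 y < s1 x)%N -> (s2 x < s2 y)%N ->
  False.
Proof.
move=> xy syx sxy; apply: (ext (t1 := swap s1 x y) (t2 := swap s2 x y)).
  by rewrite /swap common_mulg.
exact: improves_trans (improves_swap2 A _ HB xy sxy) (improves_swap1 B s2 HA xy syx).
Qed.

Lemma extremal_four_cycle_aligned i j i' j' : four_cycle s1 s2 i j i' j' ->
  aligned i j i' j' \/ aligned i' j' i j.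
Proof.
move=> c; have /andP[ni ni'] := four_cycle_disagree c.
case/and5P: c => ii' _ /eqP <- /eqP <- _.
rewrite /aligned !extremal_s1_increasing // !andbb.
by case: (ltngtP i i') ii' => [| | /val_inj->]; [left | right | rewrite eqxx].
Qed.

Lemma extremal_four_cycles_nested i1 j1 i1' j1' i2 j2 i2' j2' :
  four_cycle s1 s2 i1 j1 i1' j1' -> aligned i1 j1 i1' j1' ->
  four_cycle s1 s2 i2 j2 i2' j2' -> aligned i2 j2 i2' j2' -> i1 != i2 ->
  nested4 i1 j1 i1' j1' i2 j2 i2' j2' \/ nested4 i2 j2 i2' j2' i1 j1 i1' j1'.
Proof.
wlog lt12 : i1 j1 i1' j1' i2 j2 i2' j2' / (i1 < i2)%N.
  move=> inner c1 al1 c2 al2; case: (ltngtP i1 i2) => [lt12 | lt21 | /val_inj->].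
  - by move=> ne; case: (inner _ _ _ _ _ _ _ _ lt12 c1 al1 c2 al2 ne); auto.
  - by rewrite eq_sym => ne; case: (inner _ _ _ _ _ _ _ _ lt21 c2 al2 c1 al1 ne); auto.
  by rewrite eqxx.
move=> c1 al1 c2 /andP[i2i2' j2j2'] _; right.
have /andP[n1 n1'] := four_cycle_disagree c1.
have /andP[n2 n2'] := four_cycle_disagree c2.
case/and5P: c1 => _ _ /eqP s1i1 /eqP s1i1' /andP[/eqP s2i1 _].
case/and5P: c2 => _ _ /eqP s1i2 /eqP s1i2' /andP[/eqP s2i2 _].
have j2'j1' : (j2' < j1')%N by rewrite -s2i1 -s2i2 extremal_s2_decreasing.
have i2'i1' : (i2' < i1')%N by rewrite -extremal_s1_increasing // s1i1' s1i2'.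
have j1j2 : (j1 < j2)%N by rewrite -s1i1 -s1i2 extremal_s1_increasing.
by rewrite /nested4 lt12 i2i2' i2'i1' j1j2 j2j2' j2'j1'.
Qed.

Lemma extremal_two_cycle_col_gt e f a b a' b' : two_cycle s1 s2 e f ->
  four_cycle s1 s2 a b a' b' -> aligned a b a' b' -> (b < f)%N.
Proof.
move=> /andP[/eqP s1e /eqP s2e] c /andP[aa' bb'].
have /andP[na na'] := four_cycle_disagree c.
case/and5P: c => _ _ /eqP s1a /eqP s1a' /andP[/eqP s2a /eqP s2a'].
have [ae a'e] : a != e /\ a' != e.
  by split; [apply: contraNneq na | apply: contraNneq na'] => ->; rewrite s1e s2e.
have [a_a' a'a] : a != a' /\ a' != a by rewrite -!val_eqE ltn_eqF ?gtn_eqF.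
case: (ltngtP b f) => [// | fb | /val_inj bf]; exfalso; last first.
  by move: ae; rewrite -(inj_eq (@perm_inj _ s1)) s1a s1e bf eqxx.
case: (ltngtP e a) => [lt_ea | lt_ae | /val_inj ea]; last by rewrite ea eqxx in ae.
  have s2_ea : (s2 e < s2 a)%N by rewrite s2e s2a (ltn_trans fb bb').
  have s2_aa' : (swap s2 e a a < swap s2 e a a')%N.
    by rewrite swapR swapD // s2e s2a'.
  apply: (@extremal_no_triple_improvement _ _ e a a' (improves_trans
    (improves_swap2 A s1 HB aa' s2_aa') (improves_swap2 A s1 HB lt_ea s2_ea)) na na').
    by move=> i ie ia ia'; rewrite !swapD.
  by apply/or3P/Or32; rewrite swapL swapD // s2a' s1a.
case: (ltngtP e a') => [lt_ea' | lt_a'e | /val_inj ea']; last by rewrite ea' eqxx in a'e.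
  have s1_ae : (s1 e < s1 a)%N by rewrite s1e s1a.
  have s2_ea' : (s2 e < s2 a')%N by rewrite s2e s2a'.
  apply: (@extremal_no_triple_improvement _ _ e a a' (improves_trans
    (improves_swap2 A _ HB lt_ea' s2_ea') (improves_swap1 B s2 HA lt_ae s1_ae)) na na').
    by move=> i ie ia ia'; rewrite !swapD.
  by apply/or3P/Or31; rewrite swapR swapL s1a s2a'.
have s1_a'e : (s1 e < s1 a')%N by rewrite s1e s1a' (ltn_trans fb bb').
have s1_aa' : (swap s1 a' e a' < swap s1 a' e a)%N by rewrite swapL swapD // s1e s1a.
apply: (@extremal_no_triple_improvement _ _ e a a' (improves_trans
  (improves_swap1 B s2 HA aa' s1_aa') (improves_swap1 B s2 HA lt_a'e s1_a'e)) na na').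
  by move=> i ie ia ia'; rewrite !swapD.
by apply/or3P/Or33; rewrite swapR swapD // s1a s2a'.
Qed.

Lemma extremal_two_cycle_col_lt e f a b a' b' : two_cycle s1 s2 e f ->
  four_cycle s1 s2 a b a' b' -> aligned a b a' b' -> (f < b')%N.
Proof.
move=> /andP[/eqP s1e /eqP s2e] c /andP[aa' bb'].
have /andP[na na'] := four_cycle_disagree c.
case/and5P: c => _ _ /eqP s1a /eqP s1a' /andP[/eqP s2a /eqP s2a'].
have [ae a'e] : a != e /\ a' != e.
  by split; [apply: contraNneq na | apply: contraNneq na'] => ->; rewrite s1e s2e.
have [a_a' a'a] : a != a' /\ a' != a by rewrite -!val_eqE ltn_eqF ?gtn_eqF.
case: (ltngtP f b') => [// | b'f | /val_inj fb']; exfalso; last first.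
  by move: a'e; rewrite -(inj_eq (@perm_inj _ s1)) s1a' s1e fb' eqxx.
case: (ltngtP e a) => [lt_ea | lt_ae | /val_inj ea]; last by rewrite ea eqxx in ae.
  have s1_ea : (s1 a < s1 e)%N by rewrite s1e s1a (ltn_trans bb' b'f).
  have s1_aa' : (swap s1 e a a' < swap s1 e a a)%N.
    by rewrite swapR swapD // s1e s1a'.
  apply: (@extremal_no_triple_improvement _ _ e a a' (improves_trans
    (improves_swap1 B s2 HA aa' s1_aa') (improves_swap1 B s2 HA lt_ea s1_ea)) na na').
    by move=> i ie ia ia'; rewrite !swapD.
  by apply/or3P/Or32; rewrite swapL swapD // s1a' s2a.
case: (ltngtP e a') => [lt_ea' | lt_a'e | /val_inj ea']; last by rewrite ea' eqxx in a'e.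
  have s1_ea' : (s1 a' < s1 e)%N by rewrite s1e s1a'.
  have s2_ae : (s2 a < s2 e)%N by rewrite s2e s2a.
  apply: (@extremal_no_triple_improvement _ _ e a a' (improves_trans
    (improves_swap2 A _ HB lt_ae s2_ae) (improves_swap1 B s2 HA lt_ea' s1_ea')) na na').
    by move=> i ie ia ia'; rewrite !swapD.
  by apply/or3P/Or31; rewrite swapL swapR s1a' s2a.
have s2_a'e : (s2 a' < s2 e)%N by rewrite s2e s2a' (ltn_trans bb' b'f).
have s2_aa' : (swap s2 a' e a < swap s2 a' e a')%N by rewrite swapL swapD // s2e s2a.
apply: (@extremal_no_triple_improvement _ _ e a a' (improves_trans
  (improves_swap2 A s1 HB aa' s2_aa') (improves_swap2 A s1 HB lt_a'e s2_a'e)) na na').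
  by move=> i ie ia ia'; rewrite !swapD.
by apply/or3P/Or33; rewrite swapR swapD // s1a' s2a.
Qed.

Lemma extremal_two_cycle_nested e f a b a' b' : two_cycle s1 s2 e f ->
  four_cycle s1 s2 a b a' b' -> aligned a b a' b' -> nested2 e f a b a' b'.
Proof.
move=> c2 c4 al; have bf := extremal_two_cycle_col_gt c2 c4 al.
have fb' := extremal_two_cycle_col_lt c2 c4 al.
case/andP: c2 => /eqP s1e /eqP s2e.
case/and5P: c4 => _ _ /eqP s1a /eqP s1a' /andP[/eqP s2a /eqP s2a'].
have ae : (a < e)%N.
  case: (ltngtP a e) => [// | ea | /val_inj ae]; last first.
    by move: bf; rewrite -s1a -s1e ae ltnn.
  by case: (extremal_no_cross ea); rewrite ?s1a ?s1e ?s2e ?s2a.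
have ea' : (e < a')%N.
  case: (ltngtP e a') => [// | a'e | /val_inj ea']; last first.
    by move: fb'; rewrite -s1a' -s1e ea' ltnn.
  by case: (extremal_no_cross a'e); rewrite ?s1a' ?s1e ?s2e ?s2a'.
by rewrite /nested2 ae ea' bf fb'.
Qed.

End Extremal.

Theorem lemma9 (R : realDomainType) (n k : nat) (A B : 'M[R]_n)
  (HA : monge A) (HB : antimonge B)
  (Hfeas : exists s1 s2 : {perm 'I_n}, feasible k s1 s2) :
  exists s1 s2 : {perm 'I_n},
    [/\ feasible k s1 s2,
        (forall t1 t2 : {perm 'I_n}, feasible k t1 t2 ->
           recov_cost A B s1 s2 <= recov_cost A B t1 t2),
        (* all 4-cycles are aligned (for one of the two labelings of the cycle) *)
        (forall i j i' j' : 'I_n, four_cycle s1 s2 i j i' j' ->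
           aligned i j i' j' \/ aligned i' j' i j),
        (* any two distinct 4-cycles are nested, one inside the other *)
        (forall i1 j1 i1' j1' i2 j2 i2' j2' : 'I_n,
           four_cycle s1 s2 i1 j1 i1' j1' -> aligned i1 j1 i1' j1' ->
           four_cycle s1 s2 i2 j2 i2' j2' -> aligned i2 j2 i2' j2' ->
           i1 != i2 ->
           nested4 i1 j1 i1' j1' i2 j2 i2' j2' \/ nested4 i2 j2 i2' j2' i1 j1 i1' j1')
      & (* every 2-cycle is nested inside every 4-cycle *)
        (forall i j i2 j2 i2' j2' : 'I_n,
           two_cycle s1 s2 i j ->
           four_cycle s1 s2 i2 j2 i2' j2' -> aligned i2 j2 i2' j2' ->
           nested2 i j i2 j2 i2' j2')].
Proof.
have [s1 [s2 [feas opt ext]]] := exists_extremal_optimum A B Hfeas.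
exists s1, s2; split=> //.
- exact: (extremal_four_cycle_aligned HA ext).
- exact: (extremal_four_cycles_nested HA HB ext).
- exact: (extremal_two_cycle_nested HA HB ext).
Qed.
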